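(* Let $S$ be a finite semigroup such that $\equiv_{\mathsf{RM}}$ is the equality relation. Then the minimal degree of a faithful action of $S$ on a set by partial transformations is realized by a semisimple action, i.e., there is a faithful semisimple partial $S$-set of cardinality equal to the least cardinality of a faithful partial $S$-set.
   Context: Semigroups act on the right. For a regular $\mathscr J$-class $J$ (one containing an idempotent): $s\equiv_{\mathsf{RM},J}t$ iff for all $x\in J$, $xs\in J\iff xt\in J$, and if both lie in $J$ then $xs=xt$; $\equiv_{\mathsf{RM}}=\bigcap_J\equiv_{\mathsf{RM},J}$ over regular $J$. A partial $S$-set is a finite set $\Omega$ with a right action by partial maps; faithful means distinct elements act as distinct partial maps. The strong orbit of $\alpha$ is $\mathscr O_\alpha=\{\beta\mid\alpha S^1=\beta S^1\}$; it is transitive if $\mathscr O_\alpha S\cap\mathscr O_\alpha\ne\emptyset$. $\Omega$ is semisimple if every strong orbit is transitive and $S$-invariant (if $\alpha\in\mathscr O$ and $\alpha s$ is defined then $\alpha s\in\mathscr O$). *)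

From mathcomp Require Import all_boot.
Set Implicit Arguments. Unset Strict Implicit. Unset Printing Implicit Defensive.

Section Semigroup.
Variables (S : finType) (mul : S -> S -> S).

(* s <=_J t  iff  s in S^1 t S^1 *)
Definition Jle (s t : S) : Prop :=
  s = t \/ (exists x, s = mul x t) \/ (exists y, s = mul t y)
  \/ (exists x y, s = mul (mul x t) y).

Definition Jeq (s t : S) : Prop := Jle s t /\ Jle t s.

Definition idempotent_el (e : S) : Prop := mul e e = e.

(* s ≡_{RM,J} t for J the J-class of j *)
Definition RMJ (j s t : S) : Prop :=
  forall x, Jeq x j ->
    (Jeq (mul x s) j <-> Jeq (mul x t) j) /\
    (Jeq (mul x s) j -> Jeq (mul x t) j -> mul x s = mul x t).

(* ≡_RM : intersection over regular J-classes (those containing an idempotent);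
   every regular J-class is the J-class of some idempotent e. *)
Definition RMeq (s t : S) : Prop :=
  forall e, idempotent_el e -> RMJ e s t.

Section PartialSet.
Variables (Omega : finType) (act : Omega -> S -> option Omega).

Definition is_partial_action : Prop :=
  forall a s t, act a (mul s t) = obind (fun b => act b t) (act a s).

Definition faithful : Prop :=
  forall s t, (forall a, act a s = act a t) -> s = t.

Definition reach (a b : Omega) : Prop := a = b \/ exists s, act a s = Some b.

Definition strong_orbit (a b : Omega) : Prop := reach a b /\ reach b a.

Definition orbit_transitive (a : Omega) : Prop :=
  exists b c s, strong_orbit a b /\ strong_orbit a c /\ act b s = Some c.

Definition orbit_invariant (a : Omega) : Prop :=
  forall b s c, strong_orbit a b -> act b s = Some c -> strong_orbit a c.

Definition semisimple : Prop :=
  forall a, orbit_transitive a /\ orbit_invariant a.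

End PartialSet.
End Semigroup.

From mathcomp Require Import all_boot.
From mathcomp Require Import boolp.
Set Implicit Arguments. Unset Strict Implicit. Unset Printing Implicit Defensive.

(* Take a faithful partial S-set Omega of least size. Keep the points whose
   strong orbit is transitive and let s act on them only when the image stays
   in the same strong orbit; this is semisimple and no larger than Omega, so
   it suffices that it is still faithful. Suppose s and t act alike on it and
   x J xs J e. By stability of finite semigroups x R xs, say x = (xs)u. If
   g.(xs) = d, then h = g.x satisfies h.s = d and d.u = h, so h and d lie in
   one transitive strong orbit, where s and t agree: g.(xt) = d. By symmetry
   and faithfulness of Omega, xs = xt; thus s and t are RM-equivalent. *)

Lemma eq_option_of_some (T : Type) (o1 o2 : option T) :
  (forall b, o1 = Some b -> o2 = Some b) ->
  (forall b, o2 = Some b -> o1 = Some b) -> o1 = o2.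
Proof.
case: o1 => [b|] h12 h21; first by rewrite (h12 b).
by case: o2 h12 h21 => // b _ /(_ b erefl).
Qed.

(* S^1 is encoded as [option S], [None] being the adjoined identity. *)
Section FiniteSemigroup.
Variables (S : finType) (mul : S -> S -> S).
Hypothesis mulA : associative mul.

Definition lmul1 (a : option S) (y : S) : S := if a is Some a then mul a y else y.
Definition rmul1 (y : S) (b : option S) : S := if b is Some b then mul y b else y.
Definition mul1 (a b : option S) : option S :=
  match a, b with
  | Some a, Some b => Some (mul a b)
  | Some a, None => Some a
  | None, b => b
  end.

Lemma rmul1_mul1 y u v : rmul1 (rmul1 y u) v = rmul1 y (mul1 u v).
Proof. by case: u => [u|]; case: v => [v|] //=; rewrite mulA. Qed.

Lemma lmul1_mul1 a c y : lmul1 a (lmul1 c y) = lmul1 (mul1 a c) y.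
Proof. by case: a => [a|]; case: c => [c|] //=; rewrite mulA. Qed.

Lemma lmul1_rmul1 a y b : lmul1 a (rmul1 y b) = rmul1 (lmul1 a y) b.
Proof. by case: a => [a|]; case: b => [b|] //=; rewrite mulA. Qed.

Lemma JleP s t : Jle mul s t <-> exists a b, s = rmul1 (lmul1 a t) b.
Proof.
split.
- case=> [->|[[x ->]|[[y ->]|[x [y ->]]]]].
  + by exists None, None.
  + by exists (Some x), None.
  + by exists None, (Some y).
  + by exists (Some x), (Some y).
- case=> [[a|] [[b|] ->]] /=; rewrite /Jle; eauto 6.
Qed.

Lemma Jle_trans s t u : Jle mul s t -> Jle mul t u -> Jle mul s u.
Proof.
move=> /JleP [a [b ->]] /JleP [c [d ->]]; apply/JleP.
exists (mul1 a c), (mul1 d b).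
by rewrite lmul1_rmul1 rmul1_mul1 lmul1_mul1.
Qed.

Definition Rle (x y : S) : Prop := exists u, x = rmul1 y u.

Definition rideal (y : S) : {set S} := [set rmul1 y u | u : option S].

Lemma ridealP x y : reflect (Rle x y) (x \in rideal y).
Proof.
apply: (iffP imsetP) => [[u _ ->]|[u ->]]; first by exists u.
by exists u.
Qed.

(* Stability of finite semigroups: x S^1 = a (xs S^1) b is squeezed between
   xs S^1 and a (xs S^1), which cannot be larger than xs S^1. *)
Lemma Rle_of_Jle_mulr x s : Jle mul x (mul x s) -> Rle x (mul x s).
Proof.
set y := mul x s => /JleP [a [b Ex]]; apply/ridealP.
have yx : rideal y \subset rideal x.
  apply/subsetP=> _ /ridealP [u ->]; apply/ridealP.
  by exists (mul1 (Some s) u); rewrite -rmul1_mul1.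
have xay : rideal x \subset lmul1 a @: rideal y.
  apply/subsetP=> _ /ridealP [u ->]; apply/imsetP.
  exists (rmul1 y (mul1 b u)); first by apply/ridealP; exists (mul1 b u).
  by rewrite -rmul1_mul1 !lmul1_rmul1 -Ex.
have /eqP -> : rideal y == rideal x.
  by rewrite eqEcard yx (leq_trans (subset_leq_card xay)) ?leq_imset_card.
by apply/ridealP; exists None.
Qed.

Definition right_regular (a : option S) (s : S) : option (option S) :=
  Some (Some (lmul1 a s)).

Lemma right_regular_partial_action : is_partial_action mul right_regular.
Proof. by move=> [a|] s t; rewrite /right_regular //= mulA. Qed.

Lemma right_regular_faithful : faithful right_regular.
Proof. by move=> s t /(_ None) []. Qed.

End FiniteSemigroup.

Section SemisimpleCore.
Variables (S : finType) (mul : S -> S -> S).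
Variables (Om : finType) (act : Om -> S -> option Om).
Hypothesis act_mul : is_partial_action mul act.

Definition act1 (a : Om) (u : option S) : option Om :=
  if u is Some u then act a u else Some a.

Lemma act_rmul1 g y u :
  act g (rmul1 mul y u) = obind (act1^~ u) (act g y).
Proof. by case: u => [u|] /=; [rewrite act_mul | case: (act g y)]. Qed.

Lemma reach_act1 a u b : act1 a u = Some b -> reach act a b.
Proof. by case: u => [u|] /= => [h|[->]]; [right; exists u | left]. Qed.

Lemma reach_trans a b c : reach act a b -> reach act b c -> reach act a c.
Proof.
move=> [->|[s hs]] // [<-|[t ht]]; first by right; exists s.
by right; exists (mul s t); rewrite act_mul hs.
Qed.

Lemma strong_orbit_refl a : strong_orbit act a a.
Proof. by split; left. Qed.

Lemma strong_orbit_sym a b : strong_orbit act a b -> strong_orbit act b a.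
Proof. by case. Qed.

Lemma strong_orbit_trans a b c :
  strong_orbit act a b -> strong_orbit act b c -> strong_orbit act a c.
Proof. by move=> [ab ba] [bc cb]; split; apply: reach_trans; eauto. Qed.

Lemma orbit_transitive_strong_orbit a b :
  orbit_transitive act a -> strong_orbit act a b -> orbit_transitive act b.
Proof.
move=> [c [d [s [ac [ad cd]]]]] /strong_orbit_sym ba.
by exists c, d, s; split; [|split] => //; apply: strong_orbit_trans ba _.
Qed.

Definition core := {a : Om | `[< orbit_transitive act a >]}.

Definition core_act (a : core) (s : S) : option core :=
  obind (fun b => if `[< strong_orbit act (val a) b >] then insub b else None)
        (act (val a) s).

Lemma core_actP a s b :
  core_act a s = Some b <->
  act (val a) s = Some (val b) /\ strong_orbit act (val a) (val b).
Proof.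
rewrite /core_act; split.
- case: (act (val a) s) => [c|] //=; case: asboolP => // ac.
  by case: insubP => // u _ uc [<-]; subst c.
- by case=> -> ab /=; rewrite asboolT // valK.
Qed.

Lemma core_closed_strong_orbit (a : core) b :
  strong_orbit act (val a) b -> `[< orbit_transitive act b >].
Proof.
move=> ab; apply/asboolP/(orbit_transitive_strong_orbit _ ab).
exact/asboolP/(valP a).
Qed.

Lemma core_partial_action : is_partial_action mul core_act.
Proof.
move=> a s t; apply: eq_option_of_some => c.
- move=> /core_actP []; rewrite act_mul.
  case E: (act (val a) s) => [b|] //= bc ac.
  have ab : strong_orbit act (val a) b.
    by split; [right; exists s | apply: reach_trans ac.2; right; exists t].
  have -> : core_act a s = Some (exist _ b (core_closed_strong_orbit ab)).
    exact/core_actP.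
  apply/core_actP; split=> //=.
  exact: strong_orbit_trans (strong_orbit_sym ab) ac.
- case E: (core_act a s) => [b|] //= /core_actP [bc bc'].
  move/core_actP: E => [ab ab']; apply/core_actP.
  by rewrite act_mul ab /= bc; split=> //; apply: strong_orbit_trans ab' bc'.
Qed.

Lemma core_strong_orbitE a b :
  strong_orbit core_act a b <-> strong_orbit act (val a) (val b).
Proof.
have reachE a' b' : strong_orbit act (val a') (val b') -> reach core_act a' b'.
  move=> ab; case: (ab) => [[/val_inj ->|[s hs]] _]; first by left.
  by right; exists s; apply/core_actP.
split; last by move=> ab; split; apply: reachE; last apply: strong_orbit_sym.
by case=> [[->|[s /core_actP []]] _] //; apply: strong_orbit_refl.
Qed.

Lemma core_semisimple : semisimple core_act.
Proof.
move=> a; split.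
- have /asboolP [b [c [s [ab [ac bc]]]]] := valP a.
  exists (exist _ b (core_closed_strong_orbit ab)).
  exists (exist _ c (core_closed_strong_orbit ac)), s.
  split; [|split]; try exact/core_strong_orbitE.
  apply/core_actP; split=> //=.
  exact: strong_orbit_trans (strong_orbit_sym ab) ac.
- move=> b s c /core_strong_orbitE ab /core_actP [_ bc].
  exact/core_strong_orbitE/(strong_orbit_trans ab).
Qed.

Section Faithfulness.
Hypothesis act_faithful : faithful act.

Section SameCoreAction.
Variables s t : S.
Hypothesis same_core_act : forall a, core_act a s = core_act a t.

Lemma core_act_mul_Rle x u g d :
  x = rmul1 mul (mul x s) u ->
  act g (mul x s) = Some d -> act g (mul x t) = Some d.
Proof.
move=> Ex; rewrite !act_mul; case Eh: (act g x) => [h|] //= hd.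
have dh : act1 d u = Some h by rewrite -Eh {1}Ex act_rmul1 act_mul Eh /= hd.
have hd_orbit : strong_orbit act h d.
  by split; [right; exists s | exact: reach_act1 dh].
have th : `[< orbit_transitive act h >].
  by apply/asboolP; exists h, d, s; split; [exact: strong_orbit_refl | split].
have td := core_closed_strong_orbit (a := exist _ h th) hd_orbit.
have : core_act (exist _ h th) s = Some (exist _ d td) by apply/core_actP.
by rewrite same_core_act => /core_actP [/= ->].
Qed.

Lemma Rle_mul_core_act x u :
  x = rmul1 mul (mul x s) u -> x = rmul1 mul (mul x t) u.
Proof.
move=> Ex; apply: act_faithful => g; rewrite act_rmul1.
case Eh: (act g x) => [h|]; last by rewrite act_mul Eh.
move: Eh; rewrite {1}Ex act_rmul1; case Ed: (act g (mul x s)) => [d|] //= dh.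
by rewrite (core_act_mul_Rle Ex Ed).
Qed.

End SameCoreAction.

Lemma core_act_mul_eq s t x :
  (forall a, core_act a s = core_act a t) ->
  Rle mul x (mul x s) -> mul x s = mul x t.
Proof.
move=> same [u Ex]; have Ex' := Rle_mul_core_act same Ex.
have same' a : core_act a t = core_act a s by rewrite same.
apply: act_faithful => g; apply: eq_option_of_some => d.
- exact: (core_act_mul_Rle same Ex).
- exact: (core_act_mul_Rle same' Ex').
Qed.

Hypothesis mulA : associative mul.

Lemma RMeq_of_core_act s t :
  (forall a, core_act a s = core_act a t) -> RMeq mul s t.
Proof.
have mulJ_eq s' t' : (forall a, core_act a s' = core_act a t') ->
    forall x j, Jeq mul x j -> Jeq mul (mul x s') j -> mul x s' = mul x t'.
  move=> same x j [xj _] [_ jxs]; apply: core_act_mul_eq same _.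
  exact/(Rle_of_Jle_mulr mulA)/(Jle_trans mulA xj jxs).
move=> same e _ x xe; have st := mulJ_eq s t same x e xe.
have ts := mulJ_eq t s (fun a => esym (same a)) x e xe.
split; first by split=> h; [rewrite -(st h) | rewrite -(ts h)].
by move=> h _; apply: st.
Qed.

End Faithfulness.
End SemisimpleCore.

Theorem corollary2p3 (S : finType) (mul : S -> S -> S)
    (mulA : associative mul)
    (hRM : forall s t, RMeq mul s t -> s = t) :
  exists (Omega : finType) (act : Omega -> S -> option Omega),
    [/\ is_partial_action mul act, faithful act, semisimple act &
      forall (Omega' : finType) (act' : Omega' -> S -> option Omega'),
        is_partial_action mul act' -> faithful act' -> #|Omega| <= #|Omega'|].
Proof.
pose faithful_of_card n := exists (Om : finType) (act : Om -> S -> option Om),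
  [/\ #|Om| = n, is_partial_action mul act & faithful act].
have exP : exists n, `[< faithful_of_card n >].
  exists #|{: option S}|; apply/asboolP; exists _, (right_regular mul).
  split=> //; [exact: right_regular_partial_action | exact: right_regular_faithful].
case: (ex_minnP exP) => n /asboolP [Om [act [<- act_mul act_faithful]]] n_min.
exists (core act), (core_act (act := act)); split.
- exact: core_partial_action.
- by move=> s t same; apply/hRM/(RMeq_of_core_act act_mul act_faithful mulA).
- exact: core_semisimple.
- move=> Om' act' act'_mul act'_faithful; rewrite card_sig.
  apply: leq_trans (max_card _) (n_min _ _); apply/asboolP.
  by exists Om', act'.
Qed.
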